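(* Let $k\ge 2$, let $H_0$ be a finite $k$-uniform hypergraph and let $(H_t)_{t\ge0}$ be the ILTH hypergraphs generated from $H_0$. The number of paths of length two in $H_t$ is $\Theta\left((k^2+1)^t\right)$.
   Context: A $k$-uniform hypergraph has every hyperedge a $k$-element subset of the vertex set. The ILTH process: given $H_t$, form $H_{t+1}$ by adding for each vertex $x\in V(H_t)$ a new vertex $x'$ (its clone), and taking $E(H_{t+1})=E(H_t)\cup\{(e\setminus\{x\})\cup\{x'\} : e\in E(H_t),\ x\in e\}$. A path of length two in a hypergraph is a 5-tuple $(u,e_1,v,e_2,w)$ with $u,v,w$ distinct vertices, $e_1,e_2$ distinct hyperedges, $u,v\in e_1$ and $v,w\in e_2$. Asymptotics are as $t\to\infty$ with $k$ and $H_0$ fixed. *)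

From HB Require Import structures.
From mathcomp Require Import all_boot all_order all_algebra.
From mathcomp Require Import finmap.
Set Implicit Arguments. Unset Strict Implicit. Unset Printing Implicit Defensive.
Import Order.TTheory GRing.Theory Num.Theory.
Local Open Scope fset_scope.

Record hypergraph := Hypergraph { hv : {fset nat}; he : {fset {fset nat}} }.

Definition uniform (k : nat) (H : hypergraph) : Prop :=
  forall e, e \in he H -> (e `<=` hv H) /\ #|` e| = k.

(* Clones are fresh vertices: the clone of x is x + (1 + max vertex). *)
Definition shift (H : hypergraph) : nat := (\max_(x <- hv H) x).+1.
Definition clone (H : hypergraph) (x : nat) : nat := x + shift H.

Definition ilth_step (H : hypergraph) : hypergraph :=
  Hypergraph (hv H `|` [fset clone H x | x in hv H])
             (he H `|` [fset (e `\ x) `|` [fset clone H x] | e in he H, x in e]).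

Definition ilth (H0 : hypergraph) (t : nat) : hypergraph := iter t ilth_step H0.

Definition paths2 (H : hypergraph) : nat :=
  \sum_(e1 <- he H) \sum_(e2 <- he H)
   \sum_(u <- hv H) \sum_(v <- hv H) \sum_(w <- hv H)
     [&& u != v, v != w, u != w, e1 != e2,
         u \in e1, v \in e1, v \in e2 & w \in e2].

From HB Require Import structures.
From mathcomp Require Import all_boot all_order all_algebra.
From mathcomp Require Import finmap.
From mathcomp Require Import zify.
Import Order.TTheory GRing.Theory Num.Theory.

(* Write d(v) for the degree of a vertex v.  One ILTH step gives the clone x'
   the degree d(x) of x and multiplies the degree of an old vertex v by k:
   every hyperedge e through v stays, and spawns the k - 1 hyperedges in which
   a vertex of e other than v is cloned.  Hence sum_v d(v)^2 is multiplied by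
   exactly k^2 + 1 at each step, and sum_v d(v)(d(v) - 1) by at least k^2 + 1.
   A path of length two is determined by its middle vertex v, two hyperedges
   through v and one more vertex in each, so there are at most
   k^2 sum_v d(v)^2 of them; conversely, for distinct e1, e2 through v, any
   u in e1 \ e2 and w in e2 \ {v} complete a path, and both choices exist
   because the hyperedges are distinct k-sets with k >= 2.  So the count lies
   between two quantities of order (k^2 + 1)^t. *)

Set Implicit Arguments. Unset Strict Implicit. Unset Printing Implicit Defensive.

Local Open Scope fset_scope.
Local Open Scope nat_scope.

Lemma big_fsetU_disjoint (R : Type) (idx : R) (op : Monoid.com_law idx)
    (T : choiceType) (A B : {fset T}) (F : T -> R) : [disjoint A & B] ->
  \big[op/idx]_(i <- A `|` B) F i =
  op (\big[op/idx]_(i <- A) F i) (\big[op/idx]_(i <- B) F i).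
Proof.
move=> /fdisjointP dAB; rewrite (big_fsetID _ (mem A)).
congr (op _ _); apply: eq_fbigl => x; rewrite !inE /=.
  by case: (x \in A); rewrite ?andbF.
by case xA: (x \in A) => /=; rewrite ?andbT ?(negbTE (dAB _ xA)).
Qed.

Lemma exchange_big3 (R : Type) (idx : R) (op : Monoid.com_law idx)
    (I J K : Type) (rI : seq I) (rJ : seq J) (rK : seq K) (F : I -> J -> K -> R) :
  \big[op/idx]_(i <- rI) \big[op/idx]_(j <- rJ) \big[op/idx]_(l <- rK) F i j l =
  \big[op/idx]_(l <- rK) \big[op/idx]_(i <- rI) \big[op/idx]_(j <- rJ) F i j l.
Proof. by under eq_bigr do rewrite exchange_big; rewrite exchange_big. Qed.

Lemma leq_sum_seq (I : eqType) (r : seq I) (F G : I -> nat) :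
  (forall i, i \in r -> F i <= G i) -> \sum_(i <- r) F i <= \sum_(i <- r) G i.
Proof. by move=> leFG; rewrite big_seq [leqRHS]big_seq; apply: leq_sum. Qed.

Definition degree (H : hypergraph) (v : nat) : nat := \sum_(e <- he H) (v \in e).
Definition degree_sq_sum (H : hypergraph) : nat := \sum_(v <- hv H) degree H v ^ 2.
Definition degree_pair_sum (H : hypergraph) : nat :=
  \sum_(v <- hv H) degree H v * (degree H v).-1.

Lemma degree_other (H : hypergraph) e1 v : e1 \in he H -> v \in e1 ->
  \sum_(e2 <- he H) (e1 != e2) && (v \in e2) = (degree H v).-1.
Proof.
move=> e1H ve1; rewrite /degree !(big_fsetD1 e1 e1H) eqxx ve1 /=.
by apply: eq_big_seq => e2; rewrite !inE eq_sym => /andP[->].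
Qed.

Definition clone_edge (H : hypergraph) (e : {fset nat}) (x : nat) : {fset nat} :=
  e `\ x `|` [fset clone H x].
Definition cloned_edges (H : hypergraph) : {fset {fset nat}} :=
  [fset clone_edge H e x | e in he H, x in e].

Section Clone.

Variable H : hypergraph.

Lemma shift_gt x : x \in hv H -> x < shift H.
Proof. by move=> xH; rewrite ltnS (@leq_bigmax_seq _ _ xpredT id). Qed.

Lemma clone_inj : injective (clone H).
Proof. by move=> x y /addIn. Qed.

Lemma clone_neq x y : y \in hv H -> clone H x != y.
Proof. by move=> /shift_gt; rewrite /clone; lia. Qed.

Lemma clone_notin x : clone H x \notin hv H.
Proof. by apply/negP => /(clone_neq x); rewrite eqxx. Qed.

Lemma sum_vertices_step (F : nat -> nat) :
  \sum_(v <- hv (ilth_step H)) F v =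
  \sum_(v <- hv H) F v + \sum_(v <- hv H) F (clone H v).
Proof.
rewrite big_fsetU_disjoint ?big_imfset //=; first by move=> x y _ _ /clone_inj.
apply/fdisjointP => x xH; apply/imfsetP => -[y _ xE].
by have := clone_neq y xH; rewrite -xE eqxx.
Qed.

End Clone.

Section Uniform.

Variables (k : nat) (H : hypergraph).
Hypothesis uH : uniform k H.

Lemma clone_notin_edge e x : e \in he H -> clone H x \notin e.
Proof. by move=> /uH[/fsubsetP eH _]; apply: contra (clone_notin H x); apply: eH. Qed.

Lemma sum_cloned_edges (F : {fset nat} -> nat) :
  \sum_(e' <- cloned_edges H) F e' =
  \sum_(e <- he H) \sum_(x <- e) F (clone_edge H e x).
Proof.
rewrite big_imfset2 //= => -[e1 x1] [e2 x2]; rewrite !inE /=.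
move=> /andP[e1H x1e1] /andP[e2H x2e2] /= e12.
have x12 : x1 = x2.
  apply: (@clone_inj H); apply/eqP; move/fsetP/(_ (clone H x1)): e12.
  rewrite !inE (negbTE (clone_notin_edge _ e1H)) (negbTE (clone_notin_edge _ e2H)).
  by rewrite eqxx !andbF /= => <-.
subst x2; suff -> : e1 = e2 by []; apply/fsetP => y.
case: (eqVneq y x1) => [->|yx1]; first by rewrite x1e1 x2e2.
move/fsetP/(_ y): e12; rewrite !inE yx1 /=.
case: (eqVneq y (clone H x1)) => [->|_]; last by rewrite !orbF.
by rewrite !(negbTE (clone_notin_edge _ _)).
Qed.

Lemma cloned_edges_disjoint : [disjoint he H & cloned_edges H].
Proof.
apply/fdisjointP => e' /uH[/fsubsetP e'H _]; apply/imfset2P => -[e _ [x _ e'E]].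
by have := clone_notin H x; rewrite e'H // e'E !inE eqxx orbT.
Qed.

Lemma uniform_step : uniform k (ilth_step H).
Proof.
move=> e'; rewrite inE => /orP[/uH[e'H e'k] | /imfset2P[e eH [x xe ->]]].
  by split=> //; apply: fsubset_trans e'H (fsubsetUl _ _).
have [/fsubsetP eH' ek] := uH eH; split.
  apply/fsubsetP => y; rewrite !inE => /orP[/andP[_ /eH'->] // | /eqP->].
  by rewrite in_imfset ?orbT ?eH'.
rewrite fsetUC cardfsU1 -ek (cardfsD1 x e) xe !inE negb_and.
by rewrite (clone_notin_edge _ eH) orbT.
Qed.

Lemma degree_step v : degree (ilth_step H) v =
  degree H v + \sum_(e <- he H) \sum_(x <- e) (v \in clone_edge H e x).
Proof.
by rewrite /degree big_fsetU_disjoint ?cloned_edges_disjoint // sum_cloned_edges.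
Qed.

Lemma degree_step_old v : v \in hv H -> degree (ilth_step H) v = k * degree H v.
Proof.
move=> vH; rewrite degree_step {1}/degree -big_split mulnC big_distrl /=.
apply: eq_big_seq => e eH; rewrite /clone_edge.
under eq_bigr do rewrite !inE [v == clone H _]eq_sym (negbTE (clone_neq _ vH)) orbF.
case ve: (v \in e); last by rewrite big1_fset // => x _; rewrite andbF.
rewrite (big_fsetD1 v ve) eqxx /= mul1n -(uH eH).2 (cardfsD1 v e) ve card_fset_sum1.
by rewrite add0n; congr (1 + _); apply: eq_big_seq => x; rewrite !inE eq_sym => /andP[->].
Qed.

Lemma degree_step_clone v : v \in hv H ->
  degree (ilth_step H) (clone H v) = degree H v.
Proof.
move=> vH; rewrite degree_step [X in X + _]big1_fset ?add0n; last first.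
  by move=> e eH _; rewrite (negbTE (clone_notin_edge _ eH)).
apply: eq_big_seq => e eH; rewrite /clone_edge.
under eq_bigr do
  rewrite !inE (negbTE (clone_notin_edge _ eH)) andbF orFb (inj_eq (@clone_inj H)).
case ve: (v \in e); last first.
  rewrite big1_fset // => x xe _; apply/eqP; rewrite eqb0.
  by apply: contraFN ve => /eqP->.
rewrite (big_fsetD1 v ve) eqxx big1_fset // => x.
by rewrite !inE eq_sym => /andP[/negbTE->].
Qed.

Lemma sum_degree_step (G : nat -> nat) :
  \sum_(v <- hv (ilth_step H)) G (degree (ilth_step H) v) =
  \sum_(v <- hv H) (G (k * degree H v) + G (degree H v)).
Proof.
rewrite sum_vertices_step big_split /=.
congr (_ + _); apply: eq_big_seq => v vH.
  by rewrite (degree_step_old vH).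
by rewrite (degree_step_clone vH).
Qed.

Lemma degree_sq_sum_step : degree_sq_sum (ilth_step H) = (k ^ 2 + 1) * degree_sq_sum H.
Proof.
rewrite /degree_sq_sum (sum_degree_step (fun d => d ^ 2)) big_distrr /=.
by apply: eq_bigr => v _; rewrite expnMn mulnDl mul1n.
Qed.

Lemma degree_pair_sum_step :
  (k ^ 2 + 1) * degree_pair_sum H <= degree_pair_sum (ilth_step H).
Proof.
rewrite /degree_pair_sum (sum_degree_step (fun d => d * d.-1)) big_distrr /=.
apply: leq_sum => v _; case: (degree H v) => [|d]; first by rewrite !muln0.
rewrite !mulSn /=; nia.
Qed.

Lemma sum_mem_edge e : e \in he H -> \sum_(u <- hv H) (u \in e) = k.
Proof.
move=> /uH[eH <-]; rewrite card_fset_sum1 -(big_fset_incl _ eH); last first.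
  by move=> x _ /negbTE->.
by apply: eq_big_seq => x ->.
Qed.

Lemma degree_sq_sumE : degree_sq_sum H =
  \sum_(e1 <- he H) \sum_(e2 <- he H) \sum_(v <- hv H) (v \in e1) * (v \in e2).
Proof. by rewrite exchange_big3; apply: eq_bigr => v _; rewrite -mulnn big_distrlr. Qed.

Lemma degree_pair_sumE : degree_pair_sum H =
  \sum_(e1 <- he H) \sum_(e2 <- he H) \sum_(v <- hv H) [&& e1 != e2, v \in e1 & v \in e2].
Proof.
rewrite exchange_big3; apply: eq_bigr => v _; rewrite {1}/degree big_distrl /=.
apply: eq_big_seq => e1 e1H; case ve1: (v \in e1).
  by rewrite mul1n -(degree_other e1H ve1).
by rewrite big1 // => e2; rewrite andbF.
Qed.

Lemma paths2_le_degree_sq_sum : paths2 H <= k ^ 2 * degree_sq_sum H.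
Proof.
have indicator_le (a b c d e f g h : bool) :
    [&& a, b, c, d, e, f, g & h] <= e * (f * g) * h.
  by case: a b c d e f g h => [] [] [] [] [] [] [] [].
rewrite degree_sq_sumE big_distrr /=; apply: leq_sum_seq => e1 e1H.
rewrite big_distrr /=; apply: leq_sum_seq => e2 e2H.
rewrite -(mulnn k) -{1}(sum_mem_edge e1H) -(sum_mem_edge e2H) mulnAC.
rewrite big_distrlr big_distrl; apply: leq_sum => u _.
rewrite big_distrl; apply: leq_sum => v _.
rewrite big_distrr; apply: leq_sum => w _.
exact: indicator_le.
Qed.

Lemma exists_path_ends e1 e2 v : 2 <= k -> e1 \in he H -> e2 \in he H ->
  e1 != e2 -> v \in e2 -> exists u w, [/\ u \in e1, u \notin e2, w \in e2 & w != v].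
Proof.
move=> k_ge2 e1H e2H e12 ve2.
have [u] : exists u, u \in e1 `\` e2.
  apply/fset0Pn; rewrite fsetD_eq0; apply: contra e12 => e1_sub_e2.
  by rewrite eqEfcard e1_sub_e2 (uH e1H).2 (uH e2H).2 /=.
have [w] : exists w, w \in e2 `\ v.
  by apply/fset0Pn; rewrite -cardfs_gt0; have := cardfsD1 v e2; rewrite ve2 (uH e2H).2; lia.
by rewrite !inE => /andP[wv we2] /andP[ue2 ue1]; exists u, w.
Qed.

Lemma degree_pair_sum_le_paths2 : 2 <= k -> degree_pair_sum H <= paths2 H.
Proof.
move=> k_ge2; rewrite degree_pair_sumE; apply: leq_sum_seq => e1 e1H.
apply: leq_sum_seq => e2 e2H; rewrite [leqRHS]exchange_big /=.
apply: leq_sum => v _; case/boolP: [&& _, _ & _] => [/and3P[e12 ve1 ve2] | //].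
have [u [w [ue1 ue2 we2 wv]]] := exists_path_ends k_ge2 e1H e2H e12 ve2.
have uv : u != v by apply: contraNneq ue2 => ->.
have uw : u != w by apply: contraNneq ue2 => ->.
rewrite lt0n sum_nat_seq_neq0; apply/hasP; exists u; first exact: (fsubsetP (uH e1H).1).
rewrite /= sum_nat_seq_neq0; apply/hasP; exists w; first exact: (fsubsetP (uH e2H).1).
by rewrite /= uv uw [v == w]eq_sym wv e12 ue1 ve1 ve2 we2.
Qed.

End Uniform.

Section Iteration.

Variables (k : nat) (H0 : hypergraph).
Hypothesis uH0 : uniform k H0.

Lemma uniform_ilth t : uniform k (ilth H0 t).
Proof. by elim: t => [|t IH] //=; apply: uniform_step. Qed.

Lemma degree_sq_sum_ilth t :
  degree_sq_sum (ilth H0 t) = (k ^ 2 + 1) ^ t * degree_sq_sum H0.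
Proof.
elim: t => [|t IH]; first by rewrite mul1n.
by rewrite [ilth _ _]iterS (degree_sq_sum_step (@uniform_ilth t)) IH mulnA -expnS.
Qed.

Lemma degree_pair_sum_ilth t :
  (k ^ 2 + 1) ^ t * degree_pair_sum H0 <= degree_pair_sum (ilth H0 t).
Proof.
elim: t => [|t IH]; first by rewrite mul1n.
rewrite [ilth _ _]iterS expnS -mulnA.
apply: leq_trans (degree_pair_sum_step (@uniform_ilth t)).
by rewrite leq_mul2l IH orbT.
Qed.

(* [degree_pair_sum H0] itself vanishes when all degrees are 1, but after one
   step a vertex of a hyperedge has degree k >= 2. *)
Lemma degree_pair_sum_step_gt0 : 2 <= k -> he H0 != fset0 ->
  0 < degree_pair_sum (ilth_step H0).
Proof.
move=> k_ge2 /fset0Pn[e eH].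
have [v ve] : exists v, v \in e.
  by apply/fset0Pn; rewrite -cardfs_gt0 (uH0 eH).2; lia.
have vH := fsubsetP (uH0 eH).1 v ve.
have deg_gt0 : 0 < degree H0 v by rewrite /degree (big_fsetD1 _ eH) ve.
have vH1 : v \in hv (ilth_step H0) by rewrite inE vH.
rewrite /degree_pair_sum (big_fsetD1 _ vH1) /= (degree_step_old uH0 vH).
have : 2 <= k * degree H0 v by nia.
by case: (k * degree H0 v) => [|[|d]].
Qed.

End Iteration.

Local Open Scope ring_scope.

Theorem lemma4p5 (k : nat) (H0 : hypergraph) :
  (2 <= k)%N -> uniform k H0 -> he H0 != fset0 ->
  exists (c1 c2 : rat), 0 < c1 /\ 0 < c2 /\
    exists T : nat, forall t : nat, (T <= t)%N ->
      c1 * ((k ^ 2 + 1) ^ t)%:R <= (paths2 (ilth H0 t))%:R /\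
      (paths2 (ilth H0 t))%:R <= c2 * ((k ^ 2 + 1) ^ t)%:R.
Proof.
move=> k_ge2 uH0 edges_ne.
exists ((k ^ 2 + 1)%N%:R)^-1, (k ^ 2 * degree_sq_sum H0).+1%:R.
split; first by rewrite invr_gt0 ltr0n addn1.
split; first by rewrite ltr0n.
exists 1%N => -[|t] // _; have uHt := @uniform_ilth k H0 uH0 t.+1; split.
  rewrite (expnS (k ^ 2 + 1)) natrM mulrA mulVf ?mul1r ?pnatr_eq0 ?addn1 // ler_nat.
  apply: leq_trans (degree_pair_sum_le_paths2 uHt k_ge2).
  rewrite [ilth _ _]iterSr; apply: leq_trans (degree_pair_sum_ilth (uniform_step uH0) t).
  by rewrite addn1 leq_pmulr // (degree_pair_sum_step_gt0 uH0).
rewrite -natrM ler_nat; apply: leq_trans (paths2_le_degree_sq_sum uHt) _.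
by rewrite (degree_sq_sum_ilth uH0) mulnCA mulnC leq_mul.
Qed.
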